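(* Let $\Gamma$ be a valued structure with domain $\mathbb{Q}$ all of whose cost functions are piecewise linear (or piecewise linear homogeneous) and submodular. Then $\Gamma$ has fully symmetric fractional polymorphisms of all arities $k\ge2$.
   Context: A valued structure with domain $\mathbb{Q}$ has a signature $\tau$ of function symbols and cost functions $f\colon\mathbb{Q}^{\mathrm{ar}(f)}\to\mathbb{Q}\cup\{+\infty\}$. A cost function is piecewise linear (PL) if, as a partial function defined where finite, it is first-order definable over $\mathfrak{S}=(\mathbb{Q};+,1,\le)$, and piecewise linear homogeneous (PLH) if first-order definable over $\mathfrak{L}=(\mathbb{Q};<,1,(x\mapsto cx)_{c\in\mathbb{Q}})$ (definability of a partial $f$: a formula $\varphi(x_0,\dots,x_n)$ with $\varphi(a_0,a)$ iff $a_0=f(a)$ for $f(a)<\infty$, and no satisfying $a_0$ when $f(a)=+\infty$). $f$ is submodular if $f(\min(a,b))+f(\max(a,b))\le f(a)+f(b)$ for all $a,b$ (componentwise min, max). A $k$-ary fractional polymorphism of $\Gamma$ is a map $\omega$ from operations $\mathbb{Q}^k\to\mathbb{Q}$ to $\mathbb{Q}_{\ge0}$ with finite support, total weight $1$, and $\sum_g\omega(g)f(g(a^1,\dots,a^k))\le\frac1k\sum_i f(a^i)$ for all cost functions $f$ of $\Gamma$ and tuples $a^i$ ($g$ componentwise); it is fully symmetric if each $g$ in its support is invariant under permuting its arguments. *)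

From Stdlib Require List.
From HB Require Import structures.
From mathcomp Require Import all_boot all_order all_algebra all_fingroup.
Set Implicit Arguments. Unset Strict Implicit. Unset Printing Implicit Defensive.
Import Order.TTheory GRing.Theory Num.Theory.
Local Open Scope ring_scope.

(** Extended values Q ∪ {+oo}: [None] is +oo. *)
Definition ecost := option rat.

Definition cadd (x y : ecost) : ecost :=
  match x, y with Some a, Some b => Some (a + b) | _, _ => None end.

Definition cle (x y : ecost) : Prop :=
  match x, y with
  | _, None => True
  | None, Some _ => False
  | Some a, Some b => a <= b
  end.

Definition cscale (c : rat) (x : ecost) : ecost :=
  match x with Some a => Some (c * a) | None => None end.

Definition costfun (n : nat) := ('I_n -> rat) -> ecost.

(** First-order formulas over a language whose terms are of type [T],
    with equality and one binary relation symbol (<= for S, < for L). *)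
Inductive form (T : Type) : Type :=
| FEq : T -> T -> form T
| FRel : T -> T -> form T
| FNot : form T -> form T
| FAnd : form T -> form T -> form T
| FEx : nat -> form T -> form T.

Definition upd (e : nat -> rat) (v : nat) (x : rat) : nat -> rat :=
  fun m => if m == v then x else e m.

Fixpoint holds (T : Type) (teval : (nat -> rat) -> T -> rat)
    (rel : rat -> rat -> bool) (e : nat -> rat) (phi : form T) : Prop :=
  match phi with
  | FEq t u => teval e t = teval e u
  | FRel t u => rel (teval e t) (teval e u)
  | FNot p => ~ holds teval rel e p
  | FAnd p q => holds teval rel e p /\ holds teval rel e q
  | FEx v p => exists x : rat, holds teval rel (upd e v x) p
  end.

(** Terms of S = (Q; +, 1, <=). *)
Inductive termS : Type :=
| SVar : nat -> termS
| SOne : termS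
| SAdd : termS -> termS -> termS.

Fixpoint evalS (e : nat -> rat) (t : termS) : rat :=
  match t with
  | SVar v => e v
  | SOne => 1
  | SAdd t u => evalS e t + evalS e u
  end.

(** Terms of L = (Q; <, 1, (x |-> c x)_{c in Q}). *)
Inductive termL : Type :=
| LVar : nat -> termL
| LOne : termL
| LScale : rat -> termL -> termL.

Fixpoint evalL (e : nat -> rat) (t : termL) : rat :=
  match t with
  | LVar v => e v
  | LOne => 1
  | LScale c t => c * evalL e t
  end.

(** A partial function f : Q^n -> Q (undefined where f = +oo) is definable by
    phi(x_0, x_1, ..., x_n) (variable 0 is the value, variable i+1 the i-th
    argument): phi(a_0, a) holds iff f(a) = a_0 (finite). *)
Definition fo_definable (T : Type) (teval : (nat -> rat) -> T -> rat)
    (rel : rat -> rat -> bool) (n : nat) (f : costfun n) : Prop :=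
  exists phi : form T, forall (e : nat -> rat) (a : 'I_n -> rat),
    (forall i : 'I_n, e i.+1 = a i) ->
    (holds teval rel e phi <-> f a = Some (e 0%N)).

Definition piecewise_linear (n : nat) (f : costfun n) : Prop :=
  fo_definable evalS (fun x y => x <= y) f.

Definition piecewise_linear_homogeneous (n : nat) (f : costfun n) : Prop :=
  fo_definable evalL (fun x y => x < y) f.

Definition submodular (n : nat) (f : costfun n) : Prop :=
  forall a b : 'I_n -> rat,
    cle (cadd (f (fun i => Num.min (a i) (b i))) (f (fun i => Num.max (a i) (b i))))
        (cadd (f a) (f b)).

(** A k-ary fractional polymorphism given by its finite support as a list of
    pairs (weight, operation); omega(g) = total weight of entries equal to g.
    All listed weights are positive, so the listed operations form the support. *)
Definition frac_pol_of (I : Type) (ar : I -> nat)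
    (F : forall s : I, costfun (ar s)) (k : nat)
    (omega : seq (rat * (('I_k -> rat) -> rat))) : Prop :=
  (forall p, p \in map fst omega -> 0 < p) /\
  \sum_(p <- omega) p.1 = 1 /\
  forall (s : I) (a : 'I_k -> 'I_(ar s) -> rat),
    cle (\big[cadd/Some 0]_(p <- omega)
            cscale p.1 (F s (fun j => p.2 (fun i => a i j))))
        (cscale (k%:R)^-1 (\big[cadd/Some 0]_(i < k) F s (a i))).

Definition symmetric_op (k : nat) (g : ('I_k -> rat) -> rat) : Prop :=
  forall (x : 'I_k -> rat) (sigma : {perm 'I_k}), g (fun i => x (sigma i)) = g x.

Definition fully_symmetric_frac_pol (I : Type) (ar : I -> nat)
    (F : forall s : I, costfun (ar s)) (k : nat)
    (omega : seq (rat * (('I_k -> rat) -> rat))) : Prop :=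
  frac_pol_of F omega /\ forall p, List.In p omega -> symmetric_op p.2.

From mathcomp Require Import all_boot all_order all_algebra all_fingroup.
From Stdlib Require Import FunctionalExtensionality.
Set Implicit Arguments. Unset Strict Implicit. Unset Printing Implicit Defensive.
Import Order.TTheory GRing.Theory Num.Theory.
Local Open Scope ring_scope.

(* The k order statistics x |-> x_(j), each with weight 1/k, form a fully
   symmetric fractional polymorphism of every submodular cost function on Q.
   Applied coordinatewise to k tuples a^1, ..., a^k they produce the tuples
   obtained by sorting every coordinate, and this sorting can be carried out
   by insertion sort made of compare-exchange steps (a, b) |-> (min(a,b),
   max(a,b)), none of which increases the total cost by submodularity. *)

Lemma cle_refl x : cle x x.
Proof. by case: x => /=. Qed.

Lemma cle_trans x y z : cle x y -> cle y z -> cle x z.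
Proof. by case: x; case: y; case: z => //= a b c; apply: le_trans. Qed.

Lemma cleD x y x' y' : cle x x' -> cle y y' -> cle (cadd x y) (cadd x' y').
Proof. by case: x; case: x'; case: y; case: y' => //= *; apply: lerD. Qed.

Lemma caddA x y z : cadd x (cadd y z) = cadd (cadd x y) z.
Proof. by case: x; case: y; case: z => //= *; rewrite addrA. Qed.

Lemma caddC x y : cadd x y = cadd y x.
Proof. by case: x; case: y => //= *; rewrite addrC. Qed.

Lemma cscale_le c x y : 0 <= c -> cle x y -> cle (cscale c x) (cscale c y).
Proof. by move=> c_ge0; case: x; case: y => //= a b; apply: ler_wpM2l. Qed.

Lemma cscale_sum (T : Type) c (r : seq T) (G : T -> ecost) :
  cscale c (\big[cadd/Some 0]_(t <- r) G t) = \big[cadd/Some 0]_(t <- r) cscale c (G t).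
Proof.
apply: big_morph => [x y|]; last by rewrite /= mulr0.
by case: x; case: y => //= a b; rewrite mulrDr.
Qed.

Section MinMaxSort.
Variables (T : Type) (mn mx : T -> T -> T).

Fixpoint minmax_insert (x : T) (l : seq T) : seq T :=
  if l is b :: l' then mn b x :: minmax_insert (mx b x) l' else [:: x].

Definition minmax_sort : seq T -> seq T := foldr minmax_insert [::].

Lemma size_minmax_sort l : size (minmax_sort l) = size l.
Proof.
have size_insert x l' : size (minmax_insert x l') = (size l').+1.
  by elim: l' x => //= b l' IH x; rewrite IH.
by elim: l => //= x l IH; rewrite size_insert IH.
Qed.

Variable f : T -> ecost.
Hypothesis f_submod : forall a b,
  cle (cadd (f (mn a b)) (f (mx a b))) (cadd (f a) (f b)).

Lemma minmax_insert_le x l :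
  cle (\big[cadd/Some 0]_(y <- minmax_insert x l) f y)
      (cadd (f x) (\big[cadd/Some 0]_(y <- l) f y)).
Proof.
elim: l x => [|b l IH] x /=; rewrite !big_cons ?big_nil.
  by case: (f x) => //= a; rewrite addr0.
apply: cle_trans (cleD (cle_refl _) (IH _)) _.
rewrite caddA caddA (caddC (f x) (f b)).
exact: cleD (f_submod _ _) (cle_refl _).
Qed.

Lemma minmax_sort_le l :
  cle (\big[cadd/Some 0]_(y <- minmax_sort l) f y) (\big[cadd/Some 0]_(y <- l) f y).
Proof.
elim: l => [|x l IH] /=; first exact: cle_refl.
rewrite big_cons; apply: cle_trans (minmax_insert_le _ _) _.
exact: cleD (cle_refl _) IH.
Qed.

End MinMaxSort.

Lemma map_minmax_sort (T U : Type) (mn mx : T -> T -> T) (mn' mx' : U -> U -> U)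
    (h : T -> U) :
  {morph h : a b / mn a b >-> mn' a b} -> {morph h : a b / mx a b >-> mx' a b} ->
  forall l, map h (minmax_sort mn mx l) = minmax_sort mn' mx' (map h l).
Proof.
move=> h_mn h_mx; elim=> //= x l <-.
by elim: (minmax_sort mn mx l) x => //= b l' IH x; rewrite h_mn IH h_mx.
Qed.

Section TotalOrder.
Variables (d : Order.disp_t) (T : orderType d).

Lemma minmax_insert_perm (x : T) l :
  perm_eq (minmax_insert Order.min Order.max x l) (x :: l).
Proof.
elim: l x => //= b l IH x.
apply: (@perm_trans _ (Order.min b x :: Order.max b x :: l)); first by rewrite perm_cons.
by case: (leP b x) => // _; rewrite (perm_catCA [:: b] [:: x] l).
Qed.

Lemma minmax_insert_sorted (x : T) l :
  sorted <=%O l -> sorted <=%O (minmax_insert Order.min Order.max x l).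
Proof.
elim: l x => //= b l IH x; rewrite !(path_sortedE le_trans) => /andP[b_le l_sorted].
rewrite IH // andbT (perm_all _ (minmax_insert_perm _ _)) /= ge_min le_max lexx /=.
by apply/allP => y y_l; rewrite ge_min (allP b_le).
Qed.

Lemma minmax_sort_sort (l : seq T) : minmax_sort Order.min Order.max l = sort <=%O l.
Proof.
have sorted_l : sorted <=%O (minmax_sort Order.min Order.max l).
  by elim: l => //= x l IH; apply: minmax_insert_sorted.
rewrite -(sort_le_id sorted_l); apply/perm_sort_leP.
elim: l {sorted_l} => //= x l IH.
by apply: perm_trans (minmax_insert_perm _ _) _; rewrite perm_cons.
Qed.

End TotalOrder.

Definition vmin (n : nat) (a b : 'I_n -> rat) : 'I_n -> rat :=
  fun i => Num.min (a i) (b i).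

Definition vmax (n : nat) (a b : 'I_n -> rat) : 'I_n -> rat :=
  fun i => Num.max (a i) (b i).

Lemma size_index_enum (T : finType) : size (index_enum T) = #|T|.
Proof. by rewrite cardT /index_enum unlock -enumT. Qed.

(* Indexed from 0: [order_stat j x] is the (j+1)-th smallest entry of [x]. *)
Definition order_stat (k j : nat) (x : 'I_k -> rat) : rat :=
  nth 0 (sort <=%R [seq x i | i <- index_enum 'I_k]) j.

Lemma order_stat_symmetric k j : symmetric_op (@order_stat k j).
Proof.
move=> x sigma; rewrite /order_stat; congr nth; apply/perm_sort_leP.
rewrite (map_comp x sigma); apply: perm_map.
apply: uniq_perm => [||i].
- by rewrite (map_inj_uniq (@perm_inj _ sigma)) index_enum_uniq.
- exact: index_enum_uniq.
- rewrite mem_index_enum; apply/mapP; exists (sigma^-1 i)%g; last by rewrite permKV.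
  exact: mem_index_enum.
Qed.

Lemma order_stat_minmax_sort n k (a : 'I_k -> 'I_n -> rat) p0 j : (j < k)%N ->
  (fun c => order_stat j (fun i => a i c))
  = nth p0 (minmax_sort (@vmin n) (@vmax n) [seq a i | i <- index_enum 'I_k]) j.
Proof.
move=> lt_jk; apply: functional_extensionality => c.
rewrite /order_stat -(nth_map p0 0 (fun p => p c)); last first.
  by rewrite size_minmax_sort size_map size_index_enum card_ord.
rewrite (map_minmax_sort (mn' := Order.min) (mx' := Order.max)) //.
by rewrite minmax_sort_sort -map_comp.
Qed.

Definition order_stat_pol (k : nat) : seq (rat * (('I_k -> rat) -> rat)) :=
  [seq (k%:R^-1, @order_stat k j) | j <- iota 0 k].

Lemma order_stat_pol_frac_pol (I : Type) (ar : I -> nat)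
    (F : forall s : I, costfun (ar s)) (k : nat) :
  (0 < k)%N -> (forall s : I, submodular (F s)) -> frac_pol_of F (order_stat_pol k).
Proof.
move=> k_gt0 F_submod; have k_pos : (0 : rat) < k%:R by rewrite ltr0n.
split; [|split].
- by move=> p; rewrite -map_comp => /mapP[j _ ->]; rewrite invr_gt0.
- rewrite big_map -[k in iota 0 k]subn0 sumr_const_nat subn0.
  by rewrite -[_ *+ k]mulr_natr mulVf ?lt0r_neq0.
- move=> s a.
  set S := minmax_sort (@vmin _) (@vmax _) [seq a i | i <- index_enum 'I_k].
  pose p0 : 'I_(ar s) -> rat := fun=> 0.
  have size_S : size S = k by rewrite size_minmax_sort size_map size_index_enum card_ord.
  rewrite big_map (eq_big_seq (fun j => cscale k%:R^-1 (F s (nth p0 S j)))).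
  rewrite -[k in iota 0 k]size_S -[size S]subn0.
  rewrite -(big_nth p0 predT (fun p => cscale _ (F s p))).
  rewrite -cscale_sum -(big_map a xpredT (F s)).
  apply: cscale_le; first by rewrite invr_ge0 ltW.
  exact: (@minmax_sort_le _ (@vmin _) (@vmax _) (F s) (F_submod s)).
by move=> j; rewrite mem_iota => /andP[_ lt_jk]; rewrite (order_stat_minmax_sort a p0).
Qed.

Theorem corollary5 (I : Type) (ar : I -> nat) (F : forall s : I, costfun (ar s)) :
  ((forall s : I, piecewise_linear (F s)) \/
   (forall s : I, piecewise_linear_homogeneous (F s))) ->
  (forall s : I, submodular (F s)) ->
  forall k : nat, (2 <= k)%N ->
    exists omega : seq (rat * (('I_k -> rat) -> rat)),
      fully_symmetric_frac_pol F omega.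
Proof.
move=> _ F_submod k k_ge2; exists (order_stat_pol k); split.
  by apply: order_stat_pol_frac_pol; first exact: ltnW.
by move=> p /List.in_map_iff[j [<- _]]; apply: order_stat_symmetric.
Qed.
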